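(* Let $(X,T)$ be a topological dynamical system and $\mu$ a $T$-invariant Borel probability measure on $X$. The following are equivalent: (1) $\mu$ has bounded complexity with respect to $\{\hat d_n\}$; (2) $T$ is $\mu$-equicontinuous in the mean; (3) $T$ is $\mu$-mean equicontinuous.
   Context: A t.d.s. $(X,T)$ consists of a compact metric space $(X,d)$ and a continuous map $T\colon X\to X$. Let $\bar d_n(x,y)=\frac1n\sum_{i=0}^{n-1}d(T^ix,T^iy)$, $\hat d_n(x,y)=\max\{\bar d_k(x,y)\colon1\le k\le n\}$, $B_{\hat d_n}(x,\varepsilon)=\{y\colon\hat d_n(x,y)<\varepsilon\}$, and $\widehat{\mathrm{span}}_\mu(n,\varepsilon)=\min\{\#(F)\colon F\subset X,\ \mu(\bigcup_{x\in F}B_{\hat d_n}(x,\varepsilon))>1-\varepsilon\}$. $\mu$ has bounded complexity with respect to $\{\hat d_n\}$ if for every $\varepsilon>0$ there is a positive integer $C$ with $\widehat{\mathrm{span}}_\mu(n,\varepsilon)\le C$ for all $n\ge1$. A set $K\subset X$ is equicontinuous in the mean if for every $\varepsilon>0$ there is $\delta>0$ with $\hat d_n(x,y)<\varepsilon$ for all $n\ge1$ and all $x,y\in K$ with $d(x,y)<\delta$; $K$ is mean equicontinuous if for every $\varepsilon>0$ there is $\delta>0$ with $\limsup_{n\to\infty}\bar d_n(x,y)<\varepsilon$ for all $x,y\in K$ with $d(x,y)<\delta$. $T$ is $\mu$-equicontinuous in the mean (resp. $\mu$-mean equicontinuous) if for every $\tau>0$ there is a measurable $K\subset X$ with $\mu(K)>1-\tau$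 which is equicontinuous in the mean (resp. mean equicontinuous). *)

From Stdlib Require List.
From HB Require Import structures.
From mathcomp Require Import all_boot all_order all_algebra.
From mathcomp Require Import all_classical all_reals all_analysis.
Set Implicit Arguments. Unset Strict Implicit. Unset Printing Implicit Defensive.
Import Order.TTheory GRing.Theory Num.Theory.
Local Open Scope classical_set_scope.
Local Open Scope ring_scope.

Section Defs.
Variables (R : realType) (X : Type) (d : X -> X -> R).

Definition is_metric : Prop :=
  [/\ (forall x y, 0 <= d x y),
      (forall x y, d x y = 0 <-> x = y),
      (forall x y, d x y = d y x) &
      (forall x y z, d x z <= d x y + d y z)].

Definition d_open (U : set X) : Prop :=
  forall x, U x -> exists2 r : R, 0 < r & (forall y, d x y < r -> U y).

Definition d_compact : Prop :=
  forall (I : Type) (U : I -> set X),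
    (forall i, d_open (U i)) -> (forall x, exists i, U i x) ->
    exists s : list I, forall x, exists i, List.In i s /\ U i x.

Definition d_continuous (T : X -> X) : Prop :=
  forall x (e : R), 0 < e -> exists2 r : R, 0 < r &
    (forall y, d x y < r -> d (T x) (T y) < e).

Variable T : X -> X.

Definition dbar (n : nat) (x y : X) : R :=
  n%:R^-1 * \sum_(i < n) d (iter i T x) (iter i T y).

Definition dhat (n : nat) (x y : X) : R :=
  \big[Num.max/0]_(1 <= k < n.+1) dbar k x y.

Definition Bhat (n : nat) (x : X) (eps : R) : set X :=
  [set y | dhat n x y < eps].

End Defs.

Section Measure.
Context {R : realType} {dX : measure_display} {X : measurableType dX}.
Variables (d : X -> X -> R) (T : X -> X) (mu : probability X R).

Definition span_ok (n : nat) (eps : R) (k : nat) : Prop :=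
  exists F : list X, size F = k /\
    (mu [set y | exists x, List.In x F /\ Bhat d T n x eps y] > (1 - eps)%:E)%E.

Lemma span_ok_ex n eps :
  (exists k, span_ok n eps k) -> exists k, `[< span_ok n eps k >].
Proof. by move=> [k hk]; exists k; apply/asboolP. Qed.

(* \hat{span}_mu(n,eps) = min #F (0 if no such F, which never happens) *)
Definition spanhat (n : nat) (eps : R) : nat :=
  match pselect (exists k, span_ok n eps k) with
  | left h => ex_minn (span_ok_ex h)
  | right _ => 0%N
  end.

Definition bounded_complexity : Prop :=
  forall eps : R, 0 < eps -> exists C : nat, (0 < C)%N /\
    forall n : nat, (1 <= n)%N -> (spanhat n eps <= C)%N.

Definition equicontinuous_in_mean (K : set X) : Prop :=
  forall eps : R, 0 < eps -> exists2 delta : R, 0 < delta &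
    forall n x y, (1 <= n)%N -> K x -> K y -> d x y < delta ->
      dhat d T n x y < eps.

Definition mean_equicontinuous (K : set X) : Prop :=
  forall eps : R, 0 < eps -> exists2 delta : R, 0 < delta &
    forall x y, K x -> K y -> d x y < delta ->
      (limn_esup (fun n => (dbar d T n x y)%:E) < eps%:E)%E.

Definition mu_equicontinuous_in_mean : Prop :=
  forall tau : R, 0 < tau -> exists K : set X,
    [/\ measurable K, (mu K > (1 - tau)%:E)%E & equicontinuous_in_mean K].

Definition mu_mean_equicontinuous : Prop :=
  forall tau : R, 0 < tau -> exists K : set X,
    [/\ measurable K, (mu K > (1 - tau)%:E)%E & mean_equicontinuous K].

End Measure.

From HB Require Import structures.
From mathcomp Require Import all_boot all_order all_algebra.
From mathcomp Require Import all_classical all_reals all_analysis.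
From mathcomp Require Import lra.
Import Order.TTheory GRing.Theory Num.Theory.
Local Open Scope classical_set_scope.
Local Open Scope ring_scope.

(* (2) => (3) is immediate, and (2) => (1) holds because a set of measure
   > 1 - eps on which the \hat d_n are uniformly equicontinuous is covered,
   for every n, by the \hat d_n-balls around a fixed finite d-net of it.
   For the converse implications it suffices to shrink any measurable L, at an
   arbitrarily small cost in measure, to a set on which the \hat d_n are
   uniformly e-equicontinuous; intersecting successive shrinkings with
   e = 1/(k+1) and summable costs gives K.  To shrink L, cover it by finitely
   many closed pieces on each of which, off a small set, nearby points are
   \hat d_n-close, and remove a thin open shell outside every piece: two
   sufficiently d-close remaining points then lie in a common piece.
   Under mean equicontinuity the pieces are small closed d-balls: from a fixed
   centre \bar d_n is eventually small, and the finitely many earlier times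
   are handled by uniform continuity of T, ..., T^N.
   Under bounded complexity (at most C balls), the points lying for
   infinitely many n in a \hat d_n-ball of radius eps and measure >= b/C carry
   almost all the mass, and around each of them every \hat d_n-ball of radius
   2 eps has measure >= b/C.  Hence an eventually \hat d-separated family of
   such points has at most C/b members, and the closed \hat d-neighbourhoods
   of a maximal one are the pieces. *)

Section LimnEsup.
Context {R : realType}.
Local Open Scope ereal_scope.

Lemma limn_esup_le_eventually (u : (\bar R)^nat) N c :
  (forall n, (N <= n)%N -> u n <= c) -> limn_esup u <= c.
Proof.
move=> h; rewrite limn_esup_lim; apply: lime_le; first exact: is_cvg_esups.
exists N => // n /= Nn; apply/ereal_supP => _ [k /= nk <-]; apply: h.
exact: leq_trans Nn nk.
Qed.

Lemma limn_esup_lt_eventually {u : (\bar R)^nat} {c : \bar R} :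
  limn_esup u < c -> exists N, forall n, (N <= n)%N -> u n < c.
Proof.
rewrite limn_esup_lim (cvg_lim _ (@cvg_esups_inf R u)) //.
move=> /ereal_inf_lt [_ [N _ <-] hN]; exists N => n Nn; apply: le_lt_trans hN.
by apply: ereal_sup_ubound; exists n.
Qed.

End LimnEsup.

Section RealProbability.
Context {R : realType} {dX : measure_display} {X : measurableType dX}.
Variable mu : probability X R.

Definition pr (A : set X) : R := fine (mu A).

Lemma prE {A : set X} : measurable A -> mu A = (pr A)%:E.
Proof.
move=> mA; rewrite /pr fineK // ge0_fin_numE ?measure_ge0 //.
exact: le_lt_trans (probability_le1 mu mA) (ltry _).
Qed.

Lemma pr_ge0 A : 0 <= pr A.
Proof. by rewrite /pr fine_ge0 ?measure_ge0. Qed.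

Lemma pr_le1 {A : set X} : measurable A -> pr A <= 1.
Proof. by move=> mA; rewrite -lee_fin -prE // probability_le1. Qed.

Lemma prT : pr setT = 1.
Proof. by rewrite /pr probability_setT. Qed.

Lemma pr0 : pr set0 = 0.
Proof. by rewrite /pr measure0. Qed.

Lemma pr_setU_disj {A B : set X} : measurable A -> measurable B -> A `&` B = set0 ->
  pr (A `|` B) = pr A + pr B.
Proof.
move=> mA mB AB; apply: EFin_inj; rewrite -prE; last exact: measurableU.
by rewrite measureU // EFinD -!prE.
Qed.

Lemma pr_setU_le {A B : set X} : measurable A -> measurable B ->
  pr (A `|` B) <= pr A + pr B.
Proof.
move=> mA mB; rewrite -lee_fin EFinD -!prE ?measureU2 //; exact: measurableU.
Qed.

Lemma le_pr {A B : set X} : measurable A -> measurable B -> A `<=` B -> pr A <= pr B.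
Proof. by move=> mA mB AB; rewrite -lee_fin -!prE // le_measure // inE. Qed.

Lemma pr_setC {A : set X} : measurable A -> pr (~` A) = 1 - pr A.
Proof.
move=> mA; have := pr_setU_disj mA (measurableC mA) (setICr A).
rewrite setUCr prT => ->; lra.
Qed.

Lemma pr_setD {A B : set X} : measurable A -> measurable B -> pr A - pr B <= pr (A `\` B).
Proof.
move=> mA mB; have mAB : measurable (A `\` B) by exact: measurableD.
have : A `<=` (A `\` B) `|` B by move=> x Ax; case: (pselect (B x)); [right|left].
move=> /(le_pr mA (measurableU _ _ mAB mB)); have := pr_setU_le mAB mB; lra.
Qed.

Lemma pr_bigcup_approx (F : nat -> set X) : (forall n, measurable (F n)) ->
  (forall n m, (n <= m)%N -> F n `<=` F m) ->
  forall b, 0 < b -> exists N, pr (\bigcup_n F n) < pr (F N) + b.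
Proof.
move=> mF hF b b0.
have mU : measurable (\bigcup_n F n) by exact: bigcupT_measurable.
have : (mu \o F) x @[x --> \oo] --> (pr (\bigcup_n F n))%:E.
  rewrite -prE //; apply: nondecreasing_cvg_mu => // n m nm; apply/subsetPset; exact: hF.
move=> /fine_cvgP [_] /cvgrPdist_lt /(_ b b0) [N _ hN].
exists N; have := hN N (leqnn N); rewrite /= /pr.
move=> h; have := ler_norm (fine (mu (\bigcup_n F n)) - fine (mu (F N))); lra.
Qed.

Lemma pr_bigcap_approx (F : nat -> set X) : (forall n, measurable (F n)) ->
  (forall n m, (n <= m)%N -> F m `<=` F n) ->
  forall b, 0 < b -> exists N, pr (F N) < pr (\bigcap_n F n) + b.
Proof.
move=> mF hF b b0.
have mI : measurable (\bigcap_n F n) by exact: bigcapT_measurable.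
have finF0 : (mu (F 0%N) < +oo)%E by rewrite prE // ltry.
have : (mu \o F) x @[x --> \oo] --> (pr (\bigcap_n F n))%:E.
  rewrite -prE //; apply: nonincreasing_cvg_mu => // n m nm; apply/subsetPset; exact: hF.
move=> /fine_cvgP [_] /cvgrPdist_lt /(_ b b0) [N _ hN].
exists N; have := hN N (leqnn N); rewrite /= /pr.
rewrite distrC => h; have := ler_norm (fine (mu (F N)) - fine (mu (\bigcap_n F n))); lra.
Qed.

End RealProbability.

Section Equicontinuity.
Context {R : realType} {dX : measure_display} {X : measurableType dX}.
Variables (d : X -> X -> R) (T : X -> X) (mu : probability X R).
Hypothesis dmet : is_metric d.

Local Notation db := (dbar d T).
Local Notation dh := (dhat d T).
Local Notation P := (pr mu).

Lemma d_xx x : d x x = 0. Proof. by case: dmet => _ h _ _; apply/h. Qed.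
Lemma d_sym x y : d x y = d y x. Proof. by case: dmet. Qed.
Lemma d_triangle x y z : d x z <= d x y + d y z. Proof. by case: dmet. Qed.

Lemma dbar_sym n x y : db n x y = db n y x.
Proof. by rewrite /dbar; congr (_ * _); apply: eq_bigr => i _; rewrite d_sym. Qed.

Lemma dbar_triangle n x y z : db n x z <= db n x y + db n y z.
Proof.
rewrite /dbar -mulrDr ler_wpM2l ?invr_ge0 // -big_split /=.
by apply: ler_sum => i _; exact: d_triangle.
Qed.

Lemma dbar_lt n x y e : (0 < n)%N ->
  (forall i, (i < n)%N -> d (iter i T x) (iter i T y) < e) -> db n x y < e.
Proof.
move=> n0 h; rewrite /dbar ltr_pdivrMl ?ltr0n //.
have -> : n%:R * e = \sum_(i < n) e by rewrite sumr_const card_ord mulr_natl.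
apply: ltr_sum => [|i _]; last exact: h.
by apply/hasP; exists (Ordinal n0); rewrite ?mem_index_enum.
Qed.

Lemma dhat_ge0 n x y : 0 <= dh n x y.
Proof.
rewrite /dhat; elim: (index_iota 1 n.+1) => [|a s ih]; first by rewrite big_nil.
by rewrite big_cons le_max ih orbT.
Qed.

Lemma dbar_le_dhat n k x y : (1 <= k <= n)%N -> db k x y <= dh n x y.
Proof.
move=> hk; rewrite /dhat; apply: (le_bigmax_seq _ k) => //.
by rewrite mem_index_iota ltnS.
Qed.

Lemma dhat_le n x y e : 0 <= e ->
  (forall k, (1 <= k <= n)%N -> db k x y <= e) -> dh n x y <= e.
Proof.
move=> e0 h; rewrite /dhat big_seq_cond; apply: bigmax_le => // k /andP[+ _].
by rewrite mem_index_iota ltnS => hk; exact: h.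
Qed.

Lemma dhat_lt n x y e : 0 < e ->
  (forall k, (1 <= k <= n)%N -> db k x y < e) -> dh n x y < e.
Proof.
move=> e0 h; rewrite /dhat big_seq_cond; apply: bigmax_lt => // k /andP[+ _].
by rewrite mem_index_iota ltnS => hk; exact: h.
Qed.

Lemma dhat_sym n x y : dh n x y = dh n y x.
Proof. by rewrite /dhat; apply: eq_bigr => k _; rewrite dbar_sym. Qed.

Lemma dhat_triangle n x y z : dh n x z <= dh n x y + dh n y z.
Proof.
apply: dhat_le => [|k hk]; first by rewrite addr_ge0 ?dhat_ge0.
by rewrite (le_trans (dbar_triangle k x y z)) // lerD ?dbar_le_dhat.
Qed.

Lemma dhat_nondecreasing n m x y : (n <= m)%N -> dh n x y <= dh m x y.
Proof.
move=> nm; apply: dhat_le => [|k /andP[k1 kn]]; first exact: dhat_ge0.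
by apply: dbar_le_dhat; rewrite k1 (leq_trans kn nm).
Qed.

Lemma dhat_lt_iter n x y e : 0 < e ->
  (forall i, (i < n)%N -> d (iter i T x) (iter i T y) < e) -> dh n x y < e.
Proof.
move=> e0 h; apply: dhat_lt => // k /andP[k1 kn]; apply: dbar_lt => // i ik.
by apply: h; exact: leq_trans ik kn.
Qed.

Lemma dhat_xx n x : dh n x x = 0.
Proof.
apply/eqP; rewrite eq_le dhat_ge0 andbT; apply: dhat_le => // k _.
by rewrite /dbar big1 ?mulr0 // => i _; rewrite d_xx.
Qed.

Hypothesis dcomp : d_compact d.
Hypothesis Tcont : d_continuous d T.
Hypothesis meas_eq : @measurable _ X = <<s d_open d >>.

Definition dball x r := [set y | d x y < r].

Definition d_closed (C : set X) := d_open d (~` C).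

Definition d_continuous_real (f : X -> R) := forall x e, 0 < e -> exists2 r, 0 < r &
  forall y, d x y < r -> `|f x - f y| < e.

Lemma d_open_measurable (U : set X) : d_open d U -> measurable U.
Proof. by rewrite meas_eq => h; apply: sub_gen_smallest. Qed.

Lemma d_closed_measurable (C : set X) : d_closed C -> measurable C.
Proof. by move=> /d_open_measurable /measurableC; rewrite setCK. Qed.

Lemma d_open_dball x r : d_open d (dball x r).
Proof.
move=> y /= hy; exists (r - d x y); first by rewrite subr_gt0.
move=> z hz; have := d_triangle x y z; rewrite /dball /=; lra.
Qed.

Lemma d_open_lt {f : X -> R} {a : R} : d_continuous_real f -> d_open d [set y | f y < a].
Proof.
move=> hf y /= hy; have [r r0 hr] := hf y (a - f y) ltac:(by rewrite subr_gt0).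
exists r => // z /hr h; have := ler_norm (f y - f z); rewrite distrC in h.
have := ler_norm (f z - f y); lra.
Qed.

Lemma d_closed_le {f : X -> R} {a : R} : d_continuous_real f -> d_closed [set y | f y <= a].
Proof.
move=> hf; rewrite /d_closed.
have -> : ~` [set y | f y <= a] = [set y | a < f y].
  by apply/seteqP; split => y /=; rewrite ltNge => /negP.
move=> y /= hy; have [r r0 hr] := hf y (f y - a) ltac:(by rewrite subr_gt0).
exists r => // z /hr h; have := ler_norm (f y - f z); lra.
Qed.

Lemma d_closed_bigcap (I : Type) (C : I -> set X) : (forall i, d_closed (C i)) ->
  d_closed (\bigcap_i C i).
Proof.
move=> hC y /=; rewrite -existsNE => -[i /= Ci].
have : (~` C i) y by move=> c; apply: Ci.
move=> /(hC i) [r r0 hr]; exists r => // z /hr nz.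
by rewrite -existsNE; exists i => c; apply: nz; apply: c.
Qed.

Lemma d_continuous_dist c : d_continuous_real (d c).
Proof.
move=> y0 e e0; exists e => // y hy.
have := d_triangle c y0 y; have := d_triangle c y y0; rewrite (d_sym y y0).
move=> h1 h2; rewrite ltr_norml; apply/andP; split; lra.
Qed.

Lemma iter_continuous i x e : 0 < e -> exists2 r, 0 < r &
  forall y, d x y < r -> d (iter i T x) (iter i T y) < e.
Proof.
elim: i x e => [|i ih] x e e0; first by exists e.
have [r1 r10 h1] := Tcont (iter i T x) e e0.
have [r r0 hr] := ih x r1 r10.
by exists r => // y /hr /h1.
Qed.

Lemma iters_continuous n x e : 0 < e -> exists2 r, 0 < r &
  forall y, d x y < r -> forall i, (i < n)%N -> d (iter i T x) (iter i T y) < e.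
Proof.
elim: n => [|n ih] e0; first by exists 1.
have [r1 r10 h1] := ih e0.
have [r2 r20 h2] := iter_continuous n x e e0.
exists (Num.min r1 r2); first by rewrite lt_min r10 r20.
move=> y; rewrite lt_min => /andP[y1 y2] i; rewrite ltnS leq_eqVlt => /orP[/eqP->|].
  exact: h2.
exact: h1.
Qed.

Lemma dhat_continuous n x : d_continuous_real (dh n x).
Proof.
move=> y0 e e0; have [r r0 hr] := iters_continuous n y0 e e0.
exists r => // y /hr h; have := dhat_lt_iter n y0 y e e0 h.
have := dhat_triangle n x y0 y; have := dhat_triangle n x y y0; rewrite (dhat_sym n y y0).
move=> h1 h2 h3; rewrite ltr_norml; apply/andP; split; lra.
Qed.

Lemma dbar_continuous n x : d_continuous_real (db n x).
Proof.
move=> y0 e e0; have [r r0 hr] := iters_continuous n y0 e e0.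
exists r => // y /hr h.
have hb : db n y0 y < e.
  case: (posnP n) => [n0|n0]; last exact: dbar_lt.
  by rewrite /dbar n0 big_ord0 mulr0.
have := dbar_triangle n x y0 y; have := dbar_triangle n x y y0; rewrite (dbar_sym n y y0).
move=> h1 h2; rewrite ltr_norml; apply/andP; split; lra.
Qed.

Lemma d_open_Bhat n x e : d_open d (Bhat d T n x e).
Proof. exact: d_open_lt (dhat_continuous n x). Qed.

Lemma list_min_pos (I : Type) (s : list I) (g : I -> R) :
  exists2 m, 0 < m & forall i, List.In i s -> 0 < g i -> m <= g i.
Proof.
elim: s => [|a s [m m0 hm]]; first by exists 1.
case: (ltP 0 (g a)) => ga.
  exists (Num.min m (g a)); first by rewrite lt_min m0 ga.
  move=> i [<-|/hm h] gi; first by rewrite ge_min lexx orbT.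
  by rewrite ge_min h.
exists m => // i [<- gi|/hm //]; lra.
Qed.

Lemma finite_net {r : R} : 0 < r -> exists s : list X, forall y, exists c, List.In c s /\ d c y < r.
Proof.
move=> r0; have := @dcomp X (fun x => dball x r) (fun x => d_open_dball x r).
case=> [x|s hs]; first by exists x; rewrite /dball /= d_xx.
by exists s.
Qed.

(* A Lebesgue-number argument: cover X by balls of half the radius on which
   the iterates are (e/2)-continuous. *)
Lemma iters_uniformly_continuous n {e : R} : 0 < e -> exists2 r, 0 < r &
  forall y y', d y y' < r -> forall i, (i < n)%N -> d (iter i T y) (iter i T y') < e.
Proof.
move=> e0; have e20 : 0 < e / 2 by rewrite divr_gt0.
pose good (p : X * R) := 0 < p.2 /\ forall y, d p.1 y < p.2 -> forall i, (i < n)%N ->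
  d (iter i T p.1) (iter i T y) < e / 2.
pose U (p : X * R) := [set y | good p /\ d p.1 y < p.2 / 2].
have Uo p : d_open d (U p).
  move=> y [gp hy]; exists (p.2 / 2 - d p.1 y); first by rewrite subr_gt0.
  move=> z hz; split => //; have := d_triangle p.1 y z; rewrite /=; lra.
have [x|s hs] := @dcomp (X * R)%type U Uo.
  have [r r0 hr] := iters_continuous n x (e/2) e20; exists (x, r); split; first by split.
  by rewrite /= d_xx divr_gt0.
have [m m0 hm] := @list_min_pos _ s (fun p => p.2 / 2).
exists m => // y y' yy' i ni.
have [p [ps [[p0 gp] py]]] := hs y.
have hm' := hm p ps (divr_gt0 p0 (ltr0Sn _ 1)).
have h1 := gp y ltac:(rewrite /=; lra) i ni.
have h2 := gp y' ltac:(have := d_triangle p.1 y y'; rewrite /=; lra) i ni.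
have := d_triangle (iter i T y) (iter i T p.1) (iter i T y'); rewrite d_sym in h1; lra.
Qed.

(** * Shrinking sets to uniformly equicontinuous ones *)

Definition equicontinuous_in_mean_eps e (K : set X) := exists2 delta, 0 < delta &
  forall n x y, (1 <= n)%N -> K x -> K y -> d x y < delta -> dh n x y < e.

Definition almost_equicontinuous_in_mean_eps e (A : set X) := forall b, 0 < b ->
  exists G, [/\ measurable G, P (A `\` G) < b & equicontinuous_in_mean_eps e (A `&` G)].

Lemma equicontinuous_in_mean_eps_sub e (A B : set X) : A `<=` B ->
  equicontinuous_in_mean_eps e B -> equicontinuous_in_mean_eps e A.
Proof. by move=> AB [dl dl0 h]; exists dl => // n x y n1 /AB Ax /AB By; exact: h. Qed.

Lemma equicontinuous_in_mean_eps_finite {e : R} {I : Type} {s : list I} {A : I -> set X} :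
  (forall i, List.In i s -> equicontinuous_in_mean_eps e (A i)) ->
  exists2 delta, 0 < delta & forall i, List.In i s ->
    forall n x y, (1 <= n)%N -> A i x -> A i y -> d x y < delta -> dh n x y < e.
Proof.
elim: s => [|j s ih] hA; first by exists 1.
have [dl1 dl10 h1] := hA j (or_introl erefl).
have [dl2 dl20 h2] := ih (fun i si => hA i (or_intror si)).
exists (Num.min dl1 dl2); first by rewrite lt_min dl10 dl20.
move=> i [<-|si] n x y n1 Ax Ay; rewrite lt_min => /andP[xy1 xy2]; first exact: h1.
exact: h2 si n x y n1 Ax Ay xy2.
Qed.

Lemma equicontinuous_in_mean_of_eps (K : set X) :
  (forall k, equicontinuous_in_mean_eps k.+1%:R^-1 K) -> equicontinuous_in_mean d T K.
Proof.
move=> h eps eps0; have [k hk] := ltr_add_invr eps0; rewrite add0r in hk.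
have [dl dl0 hdl] := h k; exists dl => // n x y n1 Kx Ky xy.
exact: lt_trans (hdl n x y n1 Kx Ky xy) hk.
Qed.

Definition outer_shell (C : set X) eta := [set y | ~ C y /\ exists z, C z /\ d z y < eta].

Lemma d_open_outer_shell C eta : d_closed C -> d_open d (outer_shell C eta).
Proof.
move=> hC y [nCy [z [Cz zy]]].
have [r1 r10 h1] := hC y nCy.
exists (Num.min r1 (eta - d z y)); first by rewrite lt_min r10 subr_gt0.
move=> w; rewrite lt_min => /andP[w1 w2]; split; first exact: h1.
exists z; split => //; have := d_triangle z y w; lra.
Qed.

Lemma outer_shell_le C e1 e2 : e1 <= e2 -> outer_shell C e1 `<=` outer_shell C e2.
Proof. by move=> le y [nC [z [Cz h]]]; split => //; exists z; split => //; lra. Qed.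

(* The shells outside a closed set decrease to the empty set. *)
Lemma pr_outer_shell_small {C : set X} b : d_closed C -> 0 < b ->
  exists2 eta, 0 < eta & P (outer_shell C eta) < b.
Proof.
move=> hC b0; pose F k := outer_shell C k.+1%:R^-1.
have mF k : measurable (F k) by apply: d_open_measurable; exact: d_open_outer_shell.
have hF n m : (n <= m)%N -> F m `<=` F n.
  by move=> nm; apply: outer_shell_le; rewrite lef_pV2 ?posrE ?ltr0Sn // ler_nat ltnS.
have [N hN] := pr_bigcap_approx mu F mF hF b b0.
exists N.+1%:R^-1; first by rewrite invr_gt0 ltr0Sn.
suff eI : \bigcap_n F n = set0 by move: hN; rewrite eI pr0 add0r.
apply/seteqP; split => // y /= hy; have [nCy _] := hy 0%N I.
have [r r0 hr] := hC y nCy.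
have [k hk] := ltr_add_invr r0; rewrite add0r in hk.
have [_ [z [Cz zy]]] := hy k I.
by apply: (hr z) => //; rewrite d_sym; exact: lt_trans zy hk.
Qed.

Definition outer_shells {I : Type} (s : list I) (C : I -> set X) eta :=
  [set y | exists i, List.In i s /\ outer_shell (C i) eta y].

Lemma d_open_outer_shells {I : Type} (s : list I) (C : I -> set X) eta :
  (forall i, List.In i s -> d_closed (C i)) -> d_open d (outer_shells s C eta).
Proof.
move=> hC y [i [si hy]]; have [r r0 hr] := d_open_outer_shell (C i) eta (hC i si) y hy.
by exists r => // z /hr hz; exists i.
Qed.

Lemma pr_outer_shells_small {I : Type} {s : list I} {C : I -> set X} b :
  (forall i, List.In i s -> d_closed (C i)) -> 0 < b ->
  exists2 eta, 0 < eta & P (outer_shells s C eta) < b.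
Proof.
elim: s b => [|j s ih] b hC b0.
  exists 1 => //; suff -> : outer_shells [::] C 1 = set0 by rewrite pr0.
  by apply/seteqP; split => // y [i []].
have b20 : 0 < b / 2 by rewrite divr_gt0.
have [e1 e10 h1] := pr_outer_shell_small (b / 2) (hC j (or_introl erefl)) b20.
have [e2 e20 h2] := ih (b / 2) (fun i si => hC i (or_intror si)) b20.
exists (Num.min e1 e2); first by rewrite lt_min e10 e20.
have sub : outer_shells (j :: s) C (Num.min e1 e2) `<=`
    outer_shell (C j) e1 `|` outer_shells s C e2.
  move=> y [i [[<-|si] hy]]; first by left; apply: outer_shell_le hy; rewrite ge_min lexx.
  by right; exists i; split => //; apply: outer_shell_le hy; rewrite ge_min lexx orbT.
have m1 : measurable (outer_shell (C j) e1).
  by apply: d_open_measurable; apply: d_open_outer_shell; apply: hC; left.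
have m2 : measurable (outer_shells s C e2).
  by apply: d_open_measurable; apply: d_open_outer_shells => i si; apply: hC; right.
have m3 : measurable (outer_shells (j :: s) C (Num.min e1 e2)).
  by apply: d_open_measurable; exact: d_open_outer_shells.
have := le_pr mu m3 (measurableU _ _ m1 m2) sub; have := pr_setU_le mu m1 m2; lra.
Qed.

(* Two points at distance < eta, one in C and the other outside the shells,
   lie in the same piece. *)
Lemma shrink_of_equicontinuous_closed_cover {I : Type} {s : list I} {C : I -> set X}
    {L : set X} {e b : R} :
  measurable L -> (forall i, List.In i s -> d_closed (C i)) ->
  (forall y, L y -> exists i, List.In i s /\ C i y) ->
  (forall i, List.In i s -> equicontinuous_in_mean_eps e (L `&` C i)) -> 0 < b ->
  exists L', [/\ measurable L', L' `<=` L, P L - b < P L' & equicontinuous_in_mean_eps e L'].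
Proof.
move=> mL hC hcov heq b0.
have [dl dl0 hdl] := equicontinuous_in_mean_eps_finite heq.
have [eta eta0 heta] := pr_outer_shells_small b hC b0.
have mS : measurable (outer_shells s C eta).
  by apply: d_open_measurable; exact: d_open_outer_shells.
exists (L `\` outer_shells s C eta); split.
- exact: measurableD.
- by move=> y [].
- by have := pr_setD mu mL mS; lra.
exists (Num.min dl eta); first by rewrite lt_min dl0 eta0.
move=> n y y' n1 [Ly Sy] [Ly' Sy']; rewrite lt_min => /andP[yy1 yy2].
have [i [si Ciy]] := hcov y Ly.
have Ciy' : C i y'.
  by apply: contrapT => nC; apply: Sy'; exists i; split => //; split => //; exists y.
exact: hdl si n y y' n1 (conj Ly Ciy) (conj Ly' Ciy') yy1.
Qed.

Lemma almost_equicontinuous_pieces {I : Type} {s : list I} {C : I -> set X} {L : set X}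
    {e : R} b :
  measurable L -> (forall i, List.In i s -> measurable (C i)) ->
  (forall i, List.In i s -> almost_equicontinuous_in_mean_eps e (L `&` C i)) -> 0 < b ->
  exists G, [/\ measurable G, P (L `\` G) < b &
    forall i, List.In i s -> equicontinuous_in_mean_eps e (L `&` C i `&` G)].
Proof.
move=> mL; elim: s b => [|j s ih] b hC halm b0.
  by exists setT; split => //; rewrite setDT pr0.
have b20 : 0 < b / 2 by rewrite divr_gt0.
have mCj : measurable (C j) by apply: hC; left.
have [Gj [mGj hGj eqj]] := halm j (or_introl erefl) _ b20.
have [G [mG hG eqG]] := ih (b / 2) (fun i si => hC i (or_intror si))
  (fun i si => halm i (or_intror si)) b20.
exists ((~` C j `|` Gj) `&` G); split.
- by apply: measurableI => //; apply: measurableU => //; exact: measurableC.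
- have sub : L `\` ((~` C j `|` Gj) `&` G) `<=` (L `&` C j `\` Gj) `|` (L `\` G).
    move=> y [Ly hy]; case: (pselect (G y)) => Gy; last by right.
    left; split; last by move=> h; apply: hy; split => //; right.
    split => //; apply: contrapT => nC; apply: hy; split => //; left; exact: nC.
  have m1 : measurable (L `&` C j `\` Gj) by apply: measurableD => //; exact: measurableI.
  have m2 : measurable (L `\` G) by exact: measurableD.
  have m3 : measurable (L `\` ((~` C j `|` Gj) `&` G)).
    apply: measurableD => //; apply: measurableI => //; apply: measurableU => //.
    exact: measurableC.
  have := le_pr mu m3 (measurableU _ _ m1 m2) sub; have := pr_setU_le mu m1 m2; lra.
- move=> i [<-|si].
    by apply: equicontinuous_in_mean_eps_sub eqj => y [[Ly Cy] [[nCy|Gy] _]] //; split.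
  by apply: equicontinuous_in_mean_eps_sub (eqG i si) => y [[Ly Cy] [_ Gy]].
Qed.

Lemma shrink_of_almost_equicontinuous_closed_cover {I : Type} {s : list I}
    {C : I -> set X} {L : set X} {e b : R} :
  measurable L -> (forall i, List.In i s -> d_closed (C i)) ->
  (forall y, L y -> exists i, List.In i s /\ C i y) ->
  (forall i, List.In i s -> almost_equicontinuous_in_mean_eps e (L `&` C i)) -> 0 < b ->
  exists L', [/\ measurable L', L' `<=` L, P L - b < P L' & equicontinuous_in_mean_eps e L'].
Proof.
move=> mL hC hcov halm b0; have b20 : 0 < b / 2 by rewrite divr_gt0.
have mC i : List.In i s -> measurable (C i) by move=> /hC; exact: d_closed_measurable.
have [G [mG hG eqG]] := almost_equicontinuous_pieces (b / 2) mL mC halm b20.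
have mLG : measurable (L `&` G) by exact: measurableI.
have hcovG y : (L `&` G) y -> exists i, List.In i s /\ C i y by move=> [/hcov].
have eqLG i : List.In i s -> equicontinuous_in_mean_eps e (L `&` G `&` C i).
  by move=> si; apply: equicontinuous_in_mean_eps_sub (eqG i si) => y [[Ly Gy] Cy].
have [L' [mL' L'sub hL' eqL']] :=
  shrink_of_equicontinuous_closed_cover mLG hC hcovG eqLG b20.
exists L'; split => //; first by move=> y /L'sub [].
have mLnG : measurable (L `\` G) by exact: measurableD.
have sub : L `<=` (L `&` G) `|` (L `\` G).
  by move=> y Ly; case: (pselect (G y)) => Gy; [left|right].
have := le_pr mu mL (measurableU _ _ mLG mLnG) sub; have := pr_setU_le mu mLG mLnG; lra.
Qed.

Definition shrinkable (K0 : set X) := forall L, measurable L -> L `<=` K0 ->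
  forall e b, 0 < e -> 0 < b ->
  exists L', [/\ measurable L', L' `<=` L, P L - b < P L' & equicontinuous_in_mean_eps e L'].

Lemma shrinking_sequence (K0 : set X) (c : nat -> R) : measurable K0 -> shrinkable K0 ->
  (forall k, 0 < c k) ->
  exists K : nat -> set X, [/\ K 0%N = K0, forall k, measurable (K k),
    forall k, K k.+1 `<=` K k, forall k, P (K k) - c k < P (K k.+1) &
    forall k, equicontinuous_in_mean_eps k.+1%:R^-1 (K k.+1)].
Proof.
move=> mK0 shK0 c0.
have : forall p : set X * nat, exists L' : set X, measurable p.1 -> p.1 `<=` K0 ->
    [/\ measurable L', L' `<=` p.1, P p.1 - c p.2 < P L' &
      equicontinuous_in_mean_eps p.2.+1%:R^-1 L'].
  move=> [L k] /=; case: (pselect (measurable L /\ L `<=` K0)) => [[mL LK]|h].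
    have [L' hL'] := shK0 L mL LK k.+1%:R^-1 (c k) ltac:(by rewrite invr_gt0) (c0 k).
    by exists L'.
  by exists L => mL LK; exfalso; apply: h.
move=> /choice [f hf].
pose K := fix K k := if k is k'.+1 then f (K k', k') else K0.
have hK k : measurable (K k) /\ K k `<=` K0.
  elim: k => [|k [mk kK0]] /=; first by split.
  have [mk' sub _ _] := hf (K k, k) mk kK0.
  by split => // x /sub /kK0.
exists K; split => // k; have [mk kK0] := hK k; first exact: mk.
all: by have [] := hf (K k, k) mk kK0.
Qed.

(* The costs c k = g/2^(k+2) add up to less than g = P K0 - (1 - tau). *)
Lemma large_equicontinuous_in_mean_of_shrinkable {K0 : set X} {tau : R} :
  measurable K0 -> 1 - tau < P K0 -> shrinkable K0 ->
  exists K, [/\ measurable K, (mu K > (1 - tau)%:E)%E & equicontinuous_in_mean d T K].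
Proof.
move=> mK0 hK0 shK0; set g := P K0 - (1 - tau).
have g0 : 0 < g by rewrite /g subr_gt0.
pose c (k : nat) : R := (2^-1) ^+ k.
have c0 k : 0 < c k by rewrite /c exprn_gt0 // invr_gt0.
have c1 k : c k <= 1 by apply: exprn_ile1; rewrite ?invr_ge0 // invf_le1 //; lra.
have cS k : c k.+1 = c k / 2 by rewrite /c exprS mulrC.
have [|K [K00 mK Kdec hK eqK]] := @shrinking_sequence K0 (fun k => g * c k / 4) mK0 shK0.
  by move=> k; rewrite divr_gt0 // mulr_gt0.
have Kloss k : P K0 - P (K k) <= g / 2 * (1 - c k).
  elim: k => [|k ih]; first by rewrite K00 /c expr0 !subrr mulr0.
  by move: (hK k); rewrite /= cS; lra.
have Kmono n m : (n <= m)%N -> K m `<=` K n.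
  move=> /subnK <-; elim: (m - n)%N => [|j ih] //= x /Kdec; exact: ih.
exists (\bigcap_k K k); split.
- exact: bigcapT_measurable.
- rewrite prE; last exact: bigcapT_measurable.
  rewrite lte_fin; have g20 : 0 < g / 2 by rewrite divr_gt0.
  have [N hN] := pr_bigcap_approx mu K mK Kmono _ g20.
  have := Kloss N; have := c1 N; have := c0 N; move: hN; rewrite /g; nra.
- apply: equicontinuous_in_mean_of_eps => k.
  by apply: equicontinuous_in_mean_eps_sub (eqK k) => x; apply.
Qed.

(** * Consequences of equicontinuity in the mean *)

Lemma mu_mean_equicontinuous_of_in_mean :
  mu_equicontinuous_in_mean d T mu -> mu_mean_equicontinuous d T mu.
Proof.
move=> h tau tau0; have [K [mK hK heq]] := h tau tau0; exists K; split => // eps eps0.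
have eps20 : 0 < eps / 2 by rewrite divr_gt0.
have [dl dl0 hdl] := heq (eps / 2) eps20.
exists dl => // x y Kx Ky xy.
apply: (le_lt_trans (@limn_esup_le_eventually _ _ 1%N (eps / 2)%:E _)).
  move=> n n1; rewrite lee_fin; apply: le_trans (ltW (hdl n x y n1 Kx Ky xy)).
  by apply: dbar_le_dhat; rewrite n1 leqnn.
rewrite lte_fin; lra.
Qed.

Lemma spanhat_le n eps k : span_ok d T mu n eps k -> (spanhat d T mu n eps <= k)%N.
Proof.
move=> hk; rewrite /spanhat; case: pselect => // h.
by case: ex_minnP => m _; apply; exact/asboolP.
Qed.

Lemma span_ok_exists n eps : 0 < eps -> exists k, span_ok d T mu n eps k.
Proof.
move=> eps0.
have [x|s hs] := @dcomp X (fun x => Bhat d T n x eps) (fun x => d_open_Bhat n x eps).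
  by exists x; rewrite /Bhat /= dhat_xx.
exists (size s), s; split => //.
have -> : [set y | exists x, List.In x s /\ Bhat d T n x eps y] = setT.
  by apply/seteqP; split => // y _; have [x [xs hx]] := hs y; exists x.
rewrite probability_setT lte_fin; lra.
Qed.

Lemma span_ok_spanhat n {eps : R} : 0 < eps -> span_ok d T mu n eps (spanhat d T mu n eps).
Proof.
move=> eps0; rewrite /spanhat; case: pselect => [h|h]; last first.
  by exfalso; apply: h; exact: span_ok_exists.
by case: ex_minnP => m /asboolP.
Qed.

Definition list_bigcup (F : list X) (B : X -> set X) :=
  [set y | exists x, List.In x F /\ B x y].

Lemma list_bigcup_nil B : list_bigcup [::] B = set0.
Proof. by apply/seteqP; split => // y [x []]. Qed.

Lemma list_bigcup_cons a F B : list_bigcup (a :: F) B = B a `|` list_bigcup F B.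
Proof.
apply/seteqP; split => y; first by move=> [x [[<-|xF] Bx]]; [left|right; exists x].
by case => [Ba|[x [xF Bx]]]; [exists a; split => //; left|exists x; split => //; right].
Qed.

Lemma measurable_list_bigcup F {B : X -> set X} : (forall x, measurable (B x)) ->
  measurable (list_bigcup F B).
Proof.
move=> mB; elim: F => [|a F ih]; first by rewrite list_bigcup_nil.
by rewrite list_bigcup_cons; exact: measurableU.
Qed.

Lemma d_open_list_bigcup F B : (forall x, d_open d (B x)) -> d_open d (list_bigcup F B).
Proof.
move=> hB y [x [xF Bxy]]; have [r r0 hr] := hB x y Bxy.
by exists r => // z /hr hz; exists x.
Qed.

Lemma pr_list_bigcup_le F {B : X -> set X} {c : R} : (forall x, measurable (B x)) ->
  (forall x, P (B x) <= c) -> P (list_bigcup F B) <= (size F)%:R * c.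
Proof.
move=> mB hB; elim: F => [|a F ih]; first by rewrite list_bigcup_nil pr0 mul0r.
have mU := measurable_list_bigcup F mB.
rewrite list_bigcup_cons /= -addn1 natrD mulrDl mul1r.
have := pr_setU_le mu (mB a) mU; have := hB a; lra.
Qed.

Lemma in_pmap (g : X -> option X) (s : list X) c x :
  List.In c s -> g c = Some x -> List.In x (pmap g s).
Proof.
elim: s => [|a s ih] //= [<-|hc] gc; first by rewrite gc /=; left.
by case: (g a) => [y|] /=; [right|]; apply: ih.
Qed.

(* The d-net is replaced by the points of K chosen near its members. *)
Lemma bounded_complexity_of_mu_equicontinuous_in_mean :
  mu_equicontinuous_in_mean d T mu -> bounded_complexity d T mu.
Proof.
move=> h eps eps0; have [K [mK hK heq]] := h eps eps0; have [dl dl0 hdl] := heq eps eps0.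
have dl20 : 0 < dl / 2 by rewrite divr_gt0.
have [s hs] := finite_net dl20.
have : forall c : X, exists o : option X,
    (forall x, o = Some x -> K x /\ d c x < dl / 2) /\
    (o = None -> forall x, K x -> ~ d c x < dl / 2).
  move=> c; case: (pselect (exists x, K x /\ d c x < dl / 2)) => [[x hx]|nh].
    by exists (Some x); split => // y [<-].
  by exists None; split => // _ x Kx hx; apply: nh; exists x.
move=> /choice [g hg].
exists (maxn (size (pmap g s)) 1); split; first by rewrite leq_max orbT.
move=> n n1; apply: leq_trans (leq_maxl _ _); apply: spanhat_le.
exists (pmap g s); split => //.
have mU : measurable (list_bigcup (pmap g s) (fun x => Bhat d T n x eps)).
  by apply: d_open_measurable; apply: d_open_list_bigcup => x; exact: d_open_Bhat.
rewrite prE // lte_fin; apply: (lt_le_trans (y := P K)).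
  by move: hK; rewrite prE // lte_fin.
apply: le_pr => // y Ky; have [c [cs cy]] := hs y.
case ec : (g c) => [x|]; last by exfalso; apply: ((hg c).2 ec y Ky).
have [Kx cx] := (hg c).1 x ec.
exists x; split; first exact: in_pmap cs ec.
rewrite /Bhat /=; apply: hdl => //; have := d_triangle x c y; rewrite d_sym in cx; lra.
Qed.

(** * Mean equicontinuity *)

Lemma measurable_dbar_tail N x0 e : measurable [set y | forall n, (N <= n)%N -> db n x0 y < e].
Proof.
have -> : [set y | forall n, (N <= n)%N -> db n x0 y < e] =
    \bigcap_n [set y | (N <= n)%N -> db n x0 y < e].
  apply/seteqP; split => y /=; first by move=> h n _ hn; exact: h n hn.
  by move=> h n hn; exact: h n I hn.
apply: bigcapT_measurable => n; case: (leqP N n) => hn.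
  have -> : [set y | true -> db n x0 y < e] = [set y | db n x0 y < e].
    by apply/seteqP; split => y /=; [move=> h; exact: h | move=> h _].
  exact: d_open_measurable (d_open_lt (dbar_continuous n x0)).
have -> : [set y | false -> db n x0 y < e] = setT.
  by apply/seteqP; split => y //= _ h.
exact: measurableT.
Qed.

(* Past a time N the triangle inequality through x0 does the job; before N,
   uniform continuity of T, ..., T^(N-1). *)
Lemma almost_equicontinuous_of_eventually_close (A : set X) x0 e : measurable A -> 0 < e ->
  (forall y, A y -> exists N, forall n, (N <= n)%N -> db n x0 y < e / 2) ->
  almost_equicontinuous_in_mean_eps e A.
Proof.
move=> mA e0 hA b b0; have e20 : 0 < e / 2 by rewrite divr_gt0.
pose F N := [set y | forall n, (N <= n)%N -> db n x0 y < e / 2].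
have mF N : measurable (F N) by exact: measurable_dbar_tail.
have mAF N : measurable (A `&` F N) by exact: measurableI.
have AFinc n m : (n <= m)%N -> A `&` F n `<=` A `&` F m.
  by move=> nm y [Ay hy]; split => // k mk; apply: hy; exact: leq_trans nm mk.
have [N hN] := pr_bigcup_approx mu _ mAF AFinc _ b0.
have eA : \bigcup_n (A `&` F n) = A.
  apply/seteqP; split => [y [n _ []] //|y Ay].
  by have [n hn] := hA y Ay; exists n.
exists (F N); split => //.
  have mAnF : measurable (A `\` F N) by exact: measurableD.
  have eU : (A `\` F N) `|` (A `&` F N) = A.
    apply/seteqP; split => [y [[]|[]] //|y Ay].
    by case: (pselect (F N y)) => hF; [right|left].
  have eI : (A `\` F N) `&` (A `&` F N) = set0.
    by apply/seteqP; split => // y [[_ nF] [_ hF]].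
  have := pr_setU_disj mu mAnF (mAF N) eI; rewrite eU; move: hN; rewrite eA; lra.
have [r r0 hr] := iters_uniformly_continuous N e20.
exists r => // n y y' n1 [Ay Fy] [Ay' Fy'] yy'.
apply: dhat_lt => // k /andP[k1 kn]; case: (leqP N k) => Nk.
  have := dbar_triangle k y x0 y'; rewrite (dbar_sym k y x0).
  have := Fy k Nk; have := Fy' k Nk; lra.
have : db k y y' < e / 2 by apply: dbar_lt => // i ik; apply: hr => //; exact: ltn_trans ik Nk.
lra.
Qed.

(* The pieces are closed d-balls of radius delta/4 around a finite net; when
   a piece meets L, its points are eventually \bar d-close to a fixed point x0
   of it. *)
Lemma shrinkable_of_mean_equicontinuous (K0 : set X) :
  mean_equicontinuous d T K0 -> shrinkable K0.
Proof.
move=> hK0 L mL LK0 e b e0 b0; have e20 : 0 < e / 2 by rewrite divr_gt0.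
have [dl dl0 hdl] := hK0 (e / 2) e20.
have r0 : 0 < dl / 4 by rewrite divr_gt0.
have [s hs] := finite_net r0.
pose C c := [set y | d c y <= dl / 4].
have cC c : d_closed (C c) by exact: d_closed_le (d_continuous_dist c).
have mLC c : measurable (L `&` C c) by apply: measurableI => //; exact: d_closed_measurable.
apply: (shrink_of_almost_equicontinuous_closed_cover (s := s) (C := C)) => // [y Ly|c _].
  by have [c [cs cy]] := hs y; exists c; split => //; exact: ltW.
have [[x0 [Lx0 Cx0]]|nx] := pselect (exists x0, L x0 /\ C c x0); last first.
  apply: (@almost_equicontinuous_of_eventually_close _ c) => // y [Ly Cy].
  by exfalso; apply: nx; exists y.
apply: (@almost_equicontinuous_of_eventually_close _ x0) => // y [Ly Cy].
have hxy : d x0 y < dl.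
  have := d_triangle x0 c y; rewrite /C /= d_sym in Cx0; move: Cy; rewrite /C /=; lra.
have [N hN] := limn_esup_lt_eventually (hdl x0 y (LK0 x0 Lx0) (LK0 y Ly) hxy).
by exists N => n Nn; rewrite -lte_fin; exact: hN.
Qed.

Lemma mu_equicontinuous_in_mean_of_mean :
  mu_mean_equicontinuous d T mu -> mu_equicontinuous_in_mean d T mu.
Proof.
move=> h tau tau0; have [K0 [mK0 hK0 heq]] := h tau tau0.
apply: (large_equicontinuous_in_mean_of_shrinkable mK0).
- by rewrite -lte_fin -prE.
- exact: shrinkable_of_mean_equicontinuous.
Qed.

(** * Bounded complexity *)

Definition heavy_points eps beta n :=
  [set y | exists2 x, beta <= P (Bhat d T n x eps) & Bhat d T n x eps y].

Definition frequently_heavy eps beta :=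
  \bigcap_N \bigcup_(n in [set n | (N <= n)%N]) heavy_points eps beta n.

Lemma d_open_heavy_points eps beta n : d_open d (heavy_points eps beta n).
Proof.
move=> y [x hx Bxy]; have [r r0 hr] := d_open_Bhat n x eps y Bxy.
by exists r => // z /hr hz; exists x.
Qed.

Lemma measurable_frequently_heavy eps beta : measurable (frequently_heavy eps beta).
Proof.
apply: bigcapT_measurable => N; apply: bigcup_measurable => n _.
by apply: d_open_measurable; exact: d_open_heavy_points.
Qed.

Lemma pr_heavy_points {eps beta : R} {n : nat} {F : list X} : 0 <= beta ->
  1 - eps < P (list_bigcup F (fun x => Bhat d T n x eps)) ->
  1 - eps - (size F)%:R * beta <= P (heavy_points eps beta n).
Proof.
move=> beta0 hF.
pose light x := if beta <= P (Bhat d T n x eps) then set0 else Bhat d T n x eps.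
have mB x : measurable (Bhat d T n x eps) by apply: d_open_measurable; exact: d_open_Bhat.
have mlight x : measurable (light x).
  by rewrite /light; case: ifP => _; [exact: measurable0|exact: mB].
have plight x : P (light x) <= beta.
  rewrite /light; case: ifP => [_|/negbT]; first by rewrite pr0.
  by rewrite -ltNge => /ltW.
have mH : measurable (heavy_points eps beta n).
  by apply: d_open_measurable; exact: d_open_heavy_points.
have mL : measurable (list_bigcup F light) by exact: measurable_list_bigcup.
have mU : measurable (list_bigcup F (fun x => Bhat d T n x eps)).
  exact: measurable_list_bigcup.
have sub : list_bigcup F (fun x => Bhat d T n x eps) `<=`
    heavy_points eps beta n `|` list_bigcup F light.
  move=> y [x [xF Bxy]]; have [h|h] := leP beta (P (Bhat d T n x eps)).
    by left; exists x.
  by right; exists x; split => //; rewrite /light leNgt h.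
have := le_pr mu mU (measurableU _ _ mH mL) sub; have := pr_setU_le mu mH mL.
have := pr_list_bigcup_le F mlight plight; lra.
Qed.

Lemma pr_frequently_heavy {eps beta b : R} :
  (forall n, (1 <= n)%N -> b <= P (heavy_points eps beta n)) ->
  forall a, 0 < a -> b - a < P (frequently_heavy eps beta).
Proof.
move=> hb a a0.
pose V N := \bigcup_(n in [set n | (N <= n)%N]) heavy_points eps beta n.
have mH n : measurable (heavy_points eps beta n).
  by apply: d_open_measurable; exact: d_open_heavy_points.
have mV N : measurable (V N) by apply: bigcup_measurable => n _.
have Vdec n m : (n <= m)%N -> V m `<=` V n.
  by move=> nm y [k /= mk hy]; exists k => //=; exact: leq_trans nm mk.
have [M hM] := pr_bigcap_approx mu V mV Vdec a a0.
have : b <= P (V M).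
  apply: le_trans (hb (maxn M 1) (leq_maxr _ _)) _; apply: le_pr => //.
  by move=> y hy; exists (maxn M 1) => //=; exact: leq_maxl.
have -> : frequently_heavy eps beta = \bigcap_N V N by [].
lra.
Qed.

(* A point close to a heavy centre sees that centre's ball inside its own
   ball of twice the radius. *)
Lemma frequently_heavy_ball eps beta y : frequently_heavy eps beta y ->
  forall n, beta <= P (Bhat d T n y (2 * eps)).
Proof.
move=> hy n; have [n' /= nn' [x hx Bxy]] := hy n I.
have mB m z r : measurable (Bhat d T m z r) by apply: d_open_measurable; exact: d_open_Bhat.
apply: le_trans hx _; apply: le_pr => // z hz; rewrite /Bhat /=.
apply: le_lt_trans (dhat_nondecreasing n n' y z nn') _.
have := dhat_triangle n' y x z; rewrite (dhat_sym n' y x); rewrite /Bhat /= in Bxy hz; lra.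
Qed.

(* With at most C balls of radius eps covering mass > 1 - eps, those of
   measure < c / C carry at most c. *)
Lemma frequently_heavy_large {eps c : R} : bounded_complexity d T mu -> 0 < eps -> 0 < c ->
  exists2 beta, 0 < beta & 1 - 2 * eps - c < P (frequently_heavy eps beta).
Proof.
move=> hbc eps0 c0; have [C [C0 hC]] := hbc eps eps0.
have C0' : 0 < C%:R :> R by rewrite ltr0n.
have beta0 : 0 < c / C%:R by rewrite divr_gt0.
exists (c / C%:R) => //.
have hb n : (1 <= n)%N -> 1 - eps - c <= P (heavy_points eps (c / C%:R) n).
  move=> n1; have [F [sF hF]] := span_ok_spanhat n eps0.
  have mU : measurable (list_bigcup F (fun x => Bhat d T n x eps)).
    by apply: d_open_measurable; apply: d_open_list_bigcup => x; exact: d_open_Bhat.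
  have hF' : 1 - eps < P (list_bigcup F (fun x => Bhat d T n x eps)).
    by rewrite -lte_fin -prE.
  have := pr_heavy_points (ltW beta0) hF'.
  have : (size F)%:R * (c / C%:R) <= C%:R * (c / C%:R).
    by rewrite ler_wpM2r ?ler_nat ?sF ?hC // ltW.
  have -> : C%:R * (c / C%:R) = c by rewrite mulrCA divff ?mulr1 // gt_eqF.
  lra.
have := pr_frequently_heavy hb eps eps0; lra.
Qed.

Definition dhat_separated rho a b := exists N, 2 * rho <= dh N a b.

Fixpoint pairwise_separated rho (s : list X) : Prop :=
  if s is a :: s' then (forall b, List.In b s' -> dhat_separated rho a b) /\
    pairwise_separated rho s'
  else True.

Lemma dhat_separated_eventually {rho : R} {a : X} {s : list X} :
  (forall b, List.In b s -> dhat_separated rho a b) ->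
  exists N, forall b, List.In b s -> forall n, (N <= n)%N -> 2 * rho <= dh n a b.
Proof.
elim: s => [|c s ih] h; first by exists 0%N.
have [N1 h1] := ih (fun b hb => h b (or_intror hb)).
have [N2 h2] := h c (or_introl erefl).
exists (maxn N1 N2) => b [<-|hb] n hn.
  by apply: (le_trans h2); apply: dhat_nondecreasing; exact: leq_trans (leq_maxr _ _) hn.
by apply: h1 => //; exact: leq_trans (leq_maxl _ _) hn.
Qed.

(* For large n the balls of radius rho around eventually separated points
   are disjoint. *)
Lemma pr_separated_balls {rho beta : R} {W : set X} :
  (forall y, W y -> forall n, beta <= P (Bhat d T n y rho)) ->
  forall s, pairwise_separated rho s -> (forall y, List.In y s -> W y) ->
  exists N0, forall N, (N0 <= N)%N ->
    (size s)%:R * beta <= P (list_bigcup s (fun a => Bhat d T N a rho)).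
Proof.
move=> hW; elim => [|a s ih] /=.
  by move=> _ _; exists 0%N => N _; rewrite mul0r pr_ge0.
move=> [hsep hs] hin.
have [N1 h1] := ih hs (fun y hy => hin y (or_intror hy)).
have [N2 h2] := dhat_separated_eventually hsep.
exists (maxn N1 N2) => N hN.
have hN1 : (N1 <= N)%N by apply: leq_trans hN; exact: leq_maxl.
have hN2 : (N2 <= N)%N by apply: leq_trans hN; exact: leq_maxr.
have mB x : measurable (Bhat d T N x rho) by apply: d_open_measurable; exact: d_open_Bhat.
have mU := measurable_list_bigcup s mB.
have eI : Bhat d T N a rho `&` list_bigcup s (fun a => Bhat d T N a rho) = set0.
  apply/seteqP; split => // z [hz [x [xs hx]]].
  have := h2 x xs N hN2; have := dhat_triangle N a z x; rewrite (dhat_sym N z x).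
  rewrite /Bhat /= in hz hx; lra.
rewrite list_bigcup_cons (pr_setU_disj mu (mB a) mU eI) -addn1 natrD mulrDl mul1r.
have := h1 N hN1; have := hW a (hin a (or_introl erefl)) N; lra.
Qed.

(* A maximal separated family has at most 1/beta members, and every point of
   W is \hat d-close to one of them. *)
Lemma finite_uniform_dhat_cover {rho beta : R} {W : set X} : 0 < beta ->
  (forall y, W y -> forall n, beta <= P (Bhat d T n y rho)) ->
  exists S : list X, forall y, W y -> exists s, List.In s S /\ forall n, dh n s y < 2 * rho.
Proof.
move=> beta0 hW.
pose ok k := `[< exists S, [/\ size S = k, forall y, List.In y S -> W y &
  pairwise_separated rho S] >].
have ex0 : exists k, ok k by exists 0%N; apply/asboolP; exists [::].
have ub k : ok k -> (k <= Num.Def.archi_bound beta^-1)%N.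
  move=> /asboolP [S [<- hS hsep]].
  have [N0 hN0] := pr_separated_balls hW _ hsep hS.
  have mB x : measurable (Bhat d T N0 x rho) by apply: d_open_measurable; exact: d_open_Bhat.
  have := pr_le1 mu (measurable_list_bigcup S mB).
  have ib : 0 <= beta^-1 by rewrite invr_ge0 ltW.
  have := archi_boundP ib.
  move=> hA h1; apply: ltnW; rewrite -(ltr_nat R); apply: le_lt_trans hA.
  rewrite -(ler_pM2r beta0) mulVf ?gt_eqF //; exact: le_trans (hN0 N0 (leqnn N0)) h1.
case: (ex_maxnP ex0 ub) => k /asboolP [S [eS hS hsep]] hmax.
exists S => y Wy; apply: contrapT => hn.
have hsy s : List.In s S -> dhat_separated rho y s.
  move=> sS; case: (pselect (forall n, dh n s y < 2 * rho)) => [h|].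
    by exfalso; apply: hn; exists s.
  rewrite -existsNE => -[n hn']; exists n; rewrite dhat_sym leNgt; exact/negP.
have : ok k.+1.
  by apply/asboolP; exists (y :: S); split => //=; [rewrite eS|move=> z [<-|/hS]].
by move=> /hmax; rewrite ltnn.
Qed.

(* The pieces are the closed \hat d-neighbourhoods of radius 4 eps of a
   finite family, so each has \hat d-diameter at most 8 eps < e. *)
Lemma shrinkable_of_bounded_complexity : bounded_complexity d T mu -> shrinkable setT.
Proof.
move=> hbc L mL _ e b e0 b0.
pose eps := Num.min (e / 10) (b / 4).
have eps0 : 0 < eps by rewrite lt_min !divr_gt0.
have epse : eps <= e / 10 by rewrite ge_min lexx.
have epsb : eps <= b / 4 by rewrite ge_min lexx orbT.
have b40 : 0 < b / 4 by rewrite divr_gt0.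
have [beta beta0 PW] := frequently_heavy_large hbc eps0 b40.
have mW := measurable_frequently_heavy eps beta.
have [S hS] := finite_uniform_dhat_cover beta0 (@frequently_heavy_ball eps beta).
pose D s := [set z | forall n, dh n s z <= 2 * (2 * eps)].
have cD s : d_closed (D s).
  have -> : D s = \bigcap_n [set z | dh n s z <= 2 * (2 * eps)].
    by apply/seteqP; split => z /= h n; [move=> _|move: (h n I)]; [apply: h|].
  by apply: d_closed_bigcap => n; exact: d_closed_le (dhat_continuous n s).
have mLW : measurable (L `&` frequently_heavy eps beta) by exact: measurableI.
have hcov y : (L `&` frequently_heavy eps beta) y -> exists s, List.In s S /\ D s y.
  by move=> [_ /hS [s [sS hs]]]; exists s; split => // n; exact: ltW.
have eqD s : List.In s S ->
    equicontinuous_in_mean_eps e (L `&` frequently_heavy eps beta `&` D s).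
  move=> _; exists 1 => // n y y' _ [_ Dy] [_ Dy'] _.
  have := dhat_triangle n y s y'; rewrite (dhat_sym n y s).
  have := Dy n; have := Dy' n; lra.
have [L' [mL' L'sub PL' eqL']] :=
  shrink_of_equicontinuous_closed_cover mLW (fun s _ => cD s) hcov eqD b40.
exists L'; split => //; first by move=> y /L'sub [].
have sub : L `<=` (L `&` frequently_heavy eps beta) `|` ~` frequently_heavy eps beta.
  by move=> y Ly; case: (pselect (frequently_heavy eps beta y)) => h; [left|right].
have := le_pr mu mL (measurableU _ _ mLW (measurableC mW)) sub.
have := pr_setU_le mu mLW (measurableC mW); rewrite (pr_setC mu mW); lra.
Qed.

Lemma mu_equicontinuous_in_mean_of_bounded_complexity :
  bounded_complexity d T mu -> mu_equicontinuous_in_mean d T mu.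
Proof.
move=> hbc tau tau0; apply: (large_equicontinuous_in_mean_of_shrinkable measurableT).
- by rewrite prT; lra.
- exact: shrinkable_of_bounded_complexity.
Qed.

End Equicontinuity.

Theorem mainTheorem8 (R : realType) (dX : measure_display) (X : measurableType dX)
  (d : X -> X -> R) (T : X -> X) (mu : probability X R) :
  is_metric d ->
  d_compact d ->
  d_continuous d T ->
  @measurable _ X = <<s d_open d >> ->
  (forall A : set X, measurable A -> mu (T @^-1` A) = mu A) ->
  (bounded_complexity d T mu <-> mu_equicontinuous_in_mean d T mu) /\
  (mu_equicontinuous_in_mean d T mu <-> mu_mean_equicontinuous d T mu).
Proof.
move=> dmet dcomp Tcont meas_eq _; split; split.
- exact: mu_equicontinuous_in_mean_of_bounded_complexity.
- exact: bounded_complexity_of_mu_equicontinuous_in_mean.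
- exact: mu_mean_equicontinuous_of_in_mean.
- exact: mu_equicontinuous_in_mean_of_mean.
Qed.
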